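(* Let $q\in\mathrm{prob}(\{0,1\}^2)$. The set $C_\le:=\{(\pi_1,\chi^{(2)}_{1|1}-\chi^{(1)}_{1|1}):(\pi,\chi)\in\Theta_2,\ \mu(\pi,\chi)=q,\ \chi^{(1)}_{0|0}\le\chi^{(2)}_{0|0}\}$ is nonempty and equals the set of all $(\mathrm{Pr},\Delta\mathrm{Se})\in[0,1]\times[-1,1]$ satisfying $q_{01}-q_{10}\le\mathrm{Pr}\,\Delta\mathrm{Se}\le\min\{q_{01},\ q_{01}-q_{10}+1-\mathrm{Pr}\}$.
   Context: $\mathrm{prob}(\mathcal{X})$ is the set of probability densities on a finite set $\mathcal{X}$; $\mathrm{markov}(\mathcal{X},\mathcal{Y})$ the set of maps $(x,y)\mapsto p_{y|x}$ with $p_{\cdot|x}\in\mathrm{prob}(\mathcal{Y})$. $\Theta_2:=\mathrm{prob}(\{0,1\})\times\mathrm{markov}(\{0,1\},\{0,1\}^2)$, $\mu(\pi,\chi)_j:=\sum_{i=0}^1\pi_i\chi_{j|i}$ for $j\in\{0,1\}^2$, $\chi^{(1)}_{\iota|i}:=\chi_{\iota0|i}+\chi_{\iota1|i}$, $\chi^{(2)}_{\iota|i}:=\chi_{0\iota|i}+\chi_{1\iota|i}$. *)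

From mathcomp Require Import all_boot all_order all_algebra.
Set Implicit Arguments. Unset Strict Implicit. Unset Printing Implicit Defensive.
Import Order.TTheory GRing.Theory Num.Theory.
Local Open Scope ring_scope.

Section Defs.
Variable R : realFieldType.

Definition prob (X : finType) (p : X -> R) : Prop :=
  (forall x, 0 <= p x) /\ \sum_(x : X) p x = 1.

(* chi in markov(X,Y): chi x y = chi_{y|x}, each chi x in prob(Y) *)
Definition markov (X Y : finType) (chi : X -> Y -> R) : Prop :=
  forall x, prob (chi x).

(* {0,1} is bool (false = 0, true = 1); {0,1}^2 is bool * bool, (a,b) = "ab" *)
Definition Theta2 (pi : bool -> R) (chi : bool -> bool * bool -> R) : Prop :=
  prob pi /\ markov chi.

Definition mu (pi : bool -> R) (chi : bool -> bool * bool -> R) (j : bool * bool) : R :=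
  \sum_(i : bool) pi i * chi i j.

Definition chi1 (chi : bool -> bool * bool -> R) (i iota : bool) : R :=
  chi i (iota, false) + chi i (iota, true).

Definition chi2 (chi : bool -> bool * bool -> R) (i iota : bool) : R :=
  chi i (false, iota) + chi i (true, iota).

Definition C_le (q : bool * bool -> R) (z : R * R) : Prop :=
  exists (pi : bool -> R) (chi : bool -> bool * bool -> R),
    [/\ Theta2 pi chi, mu pi chi =1 q,
        chi1 chi false false <= chi2 chi false false &
        z = (pi true, chi2 chi true true - chi1 chi true true)].

End Defs.

From mathcomp Require Import all_boot all_order all_algebra.
From mathcomp Require Import ring lra.
Set Implicit Arguments. Unset Strict Implicit. Unset Printing Implicit Defensive.

Import Order.TTheory GRing.Theory Num.Theory.
Local Open Scope ring_scope.

(* Read (pi, chi) as a joint law on {0,1} x {0,1}^2 and let b := pi_1 chi_{.|1}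
   be its part with i = 1, so that 0 <= b <= q, b has mass Pr,
   b_01 - b_10 = Pr dSe, and q - b (the part with i = 0) satisfies
   q_01 - b_01 <= q_10 - b_10.  Conversely any such b yields a point of C_le
   by renormalising b and q - b.  The necessity of the inequalities is then
   linear arithmetic; for sufficiency one chooses b_10 between three lower and
   three upper bounds, which the inequalities make compatible, and fills
   b_00, b_11 greedily. *)

Section Theta2Region.
Variable R : realFieldType.
Implicit Types (q : bool * bool -> R) (pi : bool -> R) (chi : bool -> bool * bool -> R).

Lemma sum_pair_bool (f : bool * bool -> R) :
  \sum_x f x = f (false, false) + f (false, true) + f (true, false) + f (true, true).
Proof.
rewrite (eq_bigr (fun x => f (x.1, x.2))); last by case.
rewrite -(pair_bigA _ (fun i j => f (i, j))) /= !big_bool /=; ring.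
Qed.

Lemma prob_le1 (X : finType) (p : X -> R) x : prob p -> p x <= 1.
Proof.
move=> [p_ge0 <-]; rewrite (bigD1 x) //= lerDl.
by apply: sumr_ge0 => y _; apply: p_ge0.
Qed.

Definition normalize {X : finType} (p d : X -> R) : X -> R :=
  if \sum_x p x == 0 then d else fun x => p x / \sum_y p y.

Section Normalize.
Variables (X : finType) (p d : X -> R).
Hypothesis p_ge0 : forall x, 0 <= p x.

Lemma prob_normalize : prob d -> prob (normalize p d).
Proof.
rewrite /normalize; have [//|s_neq0] := eqVneq => _; split.
  by move=> x; rewrite divr_ge0 ?sumr_ge0.
by rewrite -mulr_suml divff.
Qed.

Lemma mul_sum_normalize x : (\sum_y p y) * normalize p d x = p x.
Proof.
rewrite /normalize; have [s0|s_neq0] := eqVneq.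
  by rewrite s0 mul0r (psumr_eq0P (fun y _ => p_ge0 y) s0).
by rewrite mulrC divfK.
Qed.

Lemma normalize_le x y : p x <= p y -> d x <= d y -> normalize p d x <= normalize p d y.
Proof.
rewrite /normalize; case: eqP => // _ pxy _.
by rewrite ler_wpM2r // invr_ge0 sumr_ge0.
Qed.

End Normalize.

Lemma chi2_sub_chi1 chi i :
  chi2 chi i true - chi1 chi i true = chi i (false, true) - chi i (true, false).
Proof. by rewrite /chi1 /chi2; ring. Qed.

Lemma chi1_le_chi2 chi i :
  (chi1 chi i false <= chi2 chi i false) = (chi i (false, true) <= chi i (true, false)).
Proof. by rewrite /chi1 /chi2 lerD2l. Qed.

Lemma mu_sub pi chi j k :
  mu pi chi j - mu pi chi k = \sum_i pi i * (chi i j - chi i k).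
Proof. by rewrite /mu -sumrB; apply: eq_bigr => i _; rewrite mulrBr. Qed.

Definition region q (Pr dSe : R) : Prop :=
  [/\ 0 <= Pr <= 1, -1 <= dSe <= 1,
      q (false, true) - q (true, false) <= Pr * dSe &
      Pr * dSe <= Num.min (q (false, true))
                          (q (false, true) - q (true, false) + 1 - Pr)].

Lemma C_le_sub_region q Pr dSe : C_le q (Pr, dSe) -> region q Pr dSe.
Proof.
case=> pi [chi [[pi_prob chi_prob] mu_q]].
rewrite chi1_le_chi2 => chi0_le [-> ->]; rewrite chi2_sub_chi1.
have [pi_ge0 pi_sum] := pi_prob; rewrite big_bool /= in pi_sum.
have chi_ge0 i j : 0 <= chi i j by case: (chi_prob i).
have chi_le1 i j : chi i j <= 1 by apply: prob_le1.
have mu_diff : q (false, true) - q (true, false)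
    = \sum_i pi i * (chi i (false, true) - chi i (true, false)).
  by rewrite -!mu_q mu_sub.
rewrite big_bool /= in mu_diff.
have q01 : q (false, true) = \sum_i pi i * chi i (false, true) by rewrite -mu_q.
rewrite big_bool /= in q01.
have p0 := pi_ge0 false; have p1 := pi_ge0 true.
have a0 := chi_ge0 true (false, true); have b0 := chi_ge0 true (true, false).
have a1 := chi_le1 true (false, true); have b1 := chi_le1 true (true, false).
have c0 := chi_ge0 false (false, true); have d1 := chi_le1 false (true, false).
have pc_le_pd := ler_wpM2l p0 chi0_le.
have pb_ge0 := mulr_ge0 p1 b0; have pc_ge0 := mulr_ge0 p0 c0.
have pd_le_p : pi false * chi false (true, false) <= pi false by rewrite ler_piMr.
split.
- by apply/andP; split; lra.
- by apply/andP; split; lra.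
- lra.
- by rewrite le_min; apply/andP; split; lra.
Qed.

(* Conditional laws used when the corresponding weight of [pi] vanishes. *)
Definition spread (D : R) (j : bool * bool) : R :=
  match j with (false, true) => (1 + D) / 2 | (true, false) => (1 - D) / 2 | _ => 0 end.

Definition point00 (j : bool * bool) : R := if j is (false, false) then 1 else 0.

Lemma prob_spread D : -1 <= D <= 1 -> prob (spread D).
Proof.
move=> /andP[D_lb D_ub]; split; last by rewrite sum_pair_bool /=; field.
by case=> -[] -[] /=; rewrite ?lexx // divr_ge0 //; lra.
Qed.

Lemma prob_point00 : prob point00.
Proof. by split; [case=> -[] -[] | rewrite sum_pair_bool /=; ring]. Qed.

(* [b] plays the role of [pi_1 chi_{.|1}]: the conditionals are [b] and [q - b] renormalised. *)
Lemma split_sub_C_le q b P D :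
  prob q -> -1 <= D <= 1 -> (forall j, 0 <= b j <= q j) ->
  \sum_j b j = P -> b (false, true) - b (true, false) = P * D ->
  q (false, true) - b (false, true) <= q (true, false) - b (true, false) ->
  C_le q (P, D).
Proof.
move=> [q_ge0 q_sum] D_bd b_bd b_sum b_diff qb_le.
have b_ge0 j : 0 <= b j by case/andP: (b_bd j).
have qb_ge0 j : 0 <= q j - b j by rewrite subr_ge0; case/andP: (b_bd j).
have qb_sum : \sum_j (q j - b j) = 1 - P by rewrite sumrB q_sum b_sum.
exists (fun i => if i then P else 1 - P).
exists (fun i => if i then normalize b (spread D)
                 else normalize (fun j => q j - b j) point00).
split.
- split.
    have P_ge0 : 0 <= P by rewrite -b_sum sumr_ge0.
    have P_le1 : 0 <= 1 - P by rewrite -qb_sum sumr_ge0.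
    by split; [case | rewrite big_bool /=; ring].
  case; apply: prob_normalize => //; [exact: prob_spread | exact: prob_point00].
- move=> j; rewrite /mu big_bool /= -{1}b_sum -qb_sum !mul_sum_normalize //.
  by rewrite subrKC.
- by rewrite chi1_le_chi2 /=; apply: normalize_le.
- congr pair; rewrite chi2_sub_chi1 /= /normalize.
  case: eqP => [_|/eqP s_neq0]; first by rewrite /=; field.
  by rewrite -mulrBl b_diff b_sum mulrAC divff ?mul1r // -b_sum.
Qed.

Lemma region_split q P D :
  prob q -> region q P D ->
  exists b : bool * bool -> R,
    [/\ forall j, 0 <= b j <= q j, \sum_j b j = P,
        b (false, true) - b (true, false) = P * D &
        q (false, true) - b (false, true) <= q (true, false) - b (true, false)].
Proof.
move=> [q_ge0 q_sum] [/andP[P_ge0 P_le1] /andP[D_lb D_ub] lb].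
rewrite le_min => /andP[ub1 ub2]; rewrite sum_pair_bool in q_sum.
have q00 := q_ge0 (false, false); have q01 := q_ge0 (false, true).
have q10 := q_ge0 (true, false); have q11 := q_ge0 (true, true).
set t := P * D in lb ub1 ub2 *.
have t_le : t <= P by rewrite ler_piMr.
have le_t : - P <= t by rewrite -mulrN1 ler_wpM2l.
clearbody t.
(* [x] is [b (true, false)]; the three lower bounds on it lie below the three
   upper bounds exactly because of the inequalities defining the region. *)
set l := (P - 1 + q (false, true) + q (true, false) - t) / 2.
set x : R := Num.max 0 (Num.max (- t) l).
have [x_ge0 x_ge_t x_ge_l] : [/\ 0 <= x, - t <= x & l <= x].
  by rewrite !le_max !lexx !orbT.
have [x_le_q10 x_le_q01 x_le_P] : [/\ x <= q (true, false), x <= q (false, true) - t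
                                    & x <= (P - t) / 2].
  by rewrite !ge_max /l; split; apply/and3P; split; lra.
clearbody x; rewrite {}/l in x_ge_l.
set r := P - 2 * x - t.
exists (fun j => match j return R with
  | (false, false) => Num.min r (q (false, false))
  | (false, true) => x + t
  | (true, false) => x
  | (true, true) => r - Num.min r (q (false, false)) end).
rewrite sum_pair_bool /=; split; [|rewrite /r; ring|ring|lra].
by case=> -[] -[] /=; case: (leP r (q (false, false))); rewrite /r => *;
  apply/andP; split; lra.
Qed.

Lemma region_sub_C_le q Pr dSe : prob q -> region q Pr dSe -> C_le q (Pr, dSe).
Proof.
move=> q_prob reg; have [b [b_bd b_sum b_diff qb_le]] := region_split q_prob reg.
by case: reg => _ D_bd _ _; exact: (split_sub_C_le q_prob D_bd b_bd).
Qed.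

End Theta2Region.

Theorem lemma9 (R : realFieldType) (q : bool * bool -> R) :
  prob q ->
  (exists z : R * R, C_le q z) /\
  (forall Pr dSe : R,
     C_le q (Pr, dSe) <->
     [/\ 0 <= Pr <= 1, -1 <= dSe <= 1,
         q (false, true) - q (true, false) <= Pr * dSe &
         Pr * dSe <= Num.min (q (false, true))
                             (q (false, true) - q (true, false) + 1 - Pr)]).
Proof.
move=> q_prob.
have region_iff Pr dSe : C_le q (Pr, dSe) <-> region q Pr dSe.
  by split; [exact: C_le_sub_region | exact: region_sub_C_le].
split; last exact: region_iff.
exists (1, q (false, true) - q (true, false)); apply/region_iff.
have [q_ge0 _] := q_prob.
have q01_ge0 := q_ge0 (false, true); have q10_ge0 := q_ge0 (true, false).
have q01_le1 := prob_le1 (false, true) q_prob.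
have q10_le1 := prob_le1 (true, false) q_prob.
rewrite /region mul1r; split; rewrite ?le_min ?lexx ?ler01 //.
- by apply/andP; split; lra.
- by apply/andP; split; lra.
Qed.
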